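(* Let $(X,\ast,u,d)$ be a finite GL-rack whose diagonal map $\Delta$ is a single cycle of length $|X|$. Then $(X,\ast,u,d)$ is a permutation GL-rack; specifically, $x\ast y=\Delta(x)$ for all $x,y\in X$ and $u\circ d=\Delta^{-1}$.
   Context: A rack is a set $X$ with a binary operation $\ast$ such that for every $y\in X$ the map $x\mapsto x\ast y$ is a bijection of $X$ and $(x\ast y)\ast z=(x\ast z)\ast(y\ast z)$ for all $x,y,z$. A GL-rack is a quadruple $(X,\ast,u,d)$ where $(X,\ast)$ is a rack and $u,d\colon X\to X$ are maps such that for all $x,y\in X$: $u(d(x\ast x))=d(u(x\ast x))=x$; $u(x\ast y)=u(x)\ast y$ and $d(x\ast y)=d(x)\ast y$; $x\ast u(y)=x\ast d(y)=x\ast y$. The diagonal map is $\Delta(x)=x\ast x$; for a finite GL-rack it is a bijection and $\Delta=(u\circ d)^{-1}$. A permutation GL-rack is a GL-rack $(X,\ast,u,d)$ with $X$ finite and $x\ast y=\sigma(x)$ for all $x,y$, for some permutation $\sigma$ of $X$, with $u\circ d=\sigma^{-1}$. *)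

From mathcomp Require Import all_boot all_fingroup.
Set Implicit Arguments. Unset Strict Implicit. Unset Printing Implicit Defensive.

Definition is_rack (X : Type) (op : X -> X -> X) : Prop :=
  (forall y : X, bijective (fun x => op x y)) /\
  (forall x y z : X, op (op x y) z = op (op x z) (op y z)).

Definition is_GL_rack (X : Type) (op : X -> X -> X) (u d : X -> X) : Prop :=
  [/\ is_rack op,
      (forall x, u (d (op x x)) = x /\ d (u (op x x)) = x),
      (forall x y, u (op x y) = op (u x) y /\ d (op x y) = op (d x) y)
    & (forall x y, op x (u y) = op x y /\ op x (d y) = op x y)].

Definition diag (X : Type) (op : X -> X -> X) : X -> X := fun x => op x x.

(* f is a single cycle of length |X| : f is a permutation of X and
   every point reaches every other point by iterating f. *)
Definition is_full_cycle (X : finType) (f : X -> X) : Prop :=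
  bijective f /\ (forall x y : X, fconnect f x y).

Definition is_permutation_GL_rack (X : finType) (op : X -> X -> X) (u d : X -> X)
  : Prop :=
  is_GL_rack op u d /\
  exists sigma : {perm X},
    (forall x y, op x y = sigma x) /\ (forall x, u (d x) = (sigma^-1)%g x).

From mathcomp Require Import all_boot all_fingroup.

Set Implicit Arguments.
Unset Strict Implicit.
Unset Printing Implicit Defensive.

(* Self-distributivity gives [(x * x) * y = (x * y) * (x * y)], so the set of
   [x] with [x * y = x * x] contains [y] and is closed under the diagonal map.
   When the diagonal map is a single cycle this set is all of [X], so
   [x * y = Delta x]; and [u (d (Delta x)) = x] says [u o d] inverts [Delta]. *)

Section SelfDistributive.

Variables (X : Type) (op : X -> X -> X).
Hypothesis op_dist : forall x y z, op (op x y) z = op (op x z) (op y z).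

Lemma op_iter_diag (y : X) (n : nat) :
  op (iter n (diag op) y) y = diag op (iter n (diag op) y).
Proof. by elim: n => [|n IHn] //=; rewrite {1}/diag op_dist IHn. Qed.

End SelfDistributive.

Lemma op_diag_fconnect (X : finType) (op : X -> X -> X) (x y : X) :
  (forall x y z, op (op x y) z = op (op x z) (op y z)) ->
  fconnect (diag op) y x -> op x y = diag op x.
Proof. by move=> op_dist /iter_findex <-; apply: op_iter_diag. Qed.

Lemma perm_canV (X : finType) (s : {perm X}) (g : X -> X) :
  cancel s g -> g =1 (s^-1)%g.
Proof. by move=> sK x; rewrite -{1}(permKV s x) sK. Qed.

Theorem corollary3p4 (X : finType) (op : X -> X -> X) (u d : X -> X) :
  is_GL_rack op u d ->
  is_full_cycle (diag op) ->
  is_permutation_GL_rack op u d /\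
  (forall x y, op x y = diag op x) /\
  (forall x, diag op (u (d x)) = x /\ u (d (diag op x)) = x).
Proof.
move=> GL [/bij_inj diag_inj diag_conn].
have [[_ op_dist] ud_diag _ _] := GL.
have op_diag x y : op x y = diag op x by apply: op_diag_fconnect.
pose sigma := perm diag_inj.
have sigmaE : sigma =1 diag op by apply: permE.
have udK : cancel sigma (u \o d) by move=> x; rewrite sigmaE; apply: (ud_diag x).1.
have ud_sigmaV x : u (d x) = (sigma^-1)%g x := perm_canV udK x.
split; first by split=> //; exists sigma; split=> // x y; rewrite sigmaE op_diag.
split=> // x; split; last exact: (ud_diag x).1.
by rewrite ud_sigmaV -sigmaE permKV.
Qed.
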